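(* Let $G$ be a finite abelian group with a unitary representation $U$ on a finite-dimensional Hilbert space, and let $|\psi\rangle$ be any pure state. Then there is a pure state $|\psi'\rangle$ (of a system carrying a unitary representation $U'$ of $G$) such that $\psi$ and $\psi'$ can be reversibly transformed into each other by covariant CPTP maps, and $U'(a)|\psi'\rangle=|\psi'\rangle$ for all $a\in\mathrm{Sym}_G(\psi')$.
   Context: $\mathrm{Sym}_G(\psi)=\{g\in G: U(g)|\psi\rangle\langle\psi|U(g)^\dagger=|\psi\rangle\langle\psi|\}$, i.e. the set of $g$ with $U(g)|\psi\rangle=e^{i\theta_g}|\psi\rangle$ for some phase. A CPTP map $\Lambda$ between systems carrying representations $U$ and $U'$ is covariant if $U'(g)\Lambda(X)U'(g)^\dagger=\Lambda(U(g)XU(g)^\dagger)$ for all $g\in G$. *)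

From HB Require Import structures.
From mathcomp Require Import all_boot all_order all_algebra all_fingroup.
From mathcomp Require Import Rstruct complex.
From Stdlib Require Rdefinitions.
From mathcomp Require Import mxrepresentation.
Set Implicit Arguments. Unset Strict Implicit. Unset Printing Implicit Defensive.
Import Order.TTheory GRing.Theory Num.Theory.
Local Open Scope ring_scope.

Notation CC := (Rdefinitions.R)[i].

Definition adj {m n : nat} (A : 'M[CC]_(m, n)) : 'M[CC]_(n, m) :=
  \matrix_(i, j) (A j i)^*.

Definition unitary_mx {n : nat} (V : 'M[CC]_n) : Prop :=
  V *m adj V = 1%:M /\ adj V *m V = 1%:M.

Definition unitary_rep {gT : finGroupType} (G : {group gT}) (n : nat)
  (U : gT -> 'M[CC]_n) : Prop :=
  mx_repr G U /\ forall g, g \in G -> unitary_mx (U g).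

Definition pure_state {n : nat} (psi : 'cV[CC]_n) : Prop :=
  adj psi *m psi = 1%:M.

Definition proj {n : nat} (psi : 'cV[CC]_n) : 'M[CC]_n := psi *m adj psi.

Definition SymG {gT : finGroupType} (G : {group gT}) {n : nat}
  (U : gT -> 'M[CC]_n) (psi : 'cV[CC]_n) : {set gT} :=
  [set g in G | U g *m proj psi *m adj (U g) == proj psi].

(* positive semidefinite "matrix" indexed by an arbitrary finite type:
   <x, A x> >= 0 for all vectors x (over C this forces A Hermitian) *)
Definition psd {I : finType} (A : I -> I -> CC) : Prop :=
  forall x : I -> CC, 0 <= \sum_(i : I) \sum_(j : I) (x i)^* * A i j * x j.

Definition psd_mx {n : nat} (A : 'M[CC]_n) : Prop := psd (fun i j => A i j).

(* id_k (x) L acting on operators on C^k (x) C^n, indexed by pairs (a, i) *)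
Definition ampl (k : nat) {n m : nat} (L : 'M[CC]_n -> 'M[CC]_m)
  (X : ('I_k * 'I_n)%type -> ('I_k * 'I_n)%type -> CC) :
  ('I_k * 'I_m)%type -> ('I_k * 'I_m)%type -> CC :=
  fun p q => L (\matrix_(i, j) X (p.1, i) (q.1, j)) p.2 q.2.

Definition completely_positive {n m : nat} (L : 'M[CC]_n -> 'M[CC]_m) : Prop :=
  forall (k : nat) (X : ('I_k * 'I_n)%type -> ('I_k * 'I_n)%type -> CC),
    psd X -> psd (@ampl k n m L X).

Definition trace_preserving {n m : nat} (L : 'M[CC]_n -> 'M[CC]_m) : Prop :=
  forall X, \tr (L X) = \tr X.

Definition CPTP {n m : nat} (L : 'M[CC]_n -> 'M[CC]_m) : Prop :=
  linear L /\ completely_positive L /\ trace_preserving L.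

Definition covariant {gT : finGroupType} (G : {group gT}) {n m : nat}
  (U : gT -> 'M[CC]_n) (U' : gT -> 'M[CC]_m) (L : 'M[CC]_n -> 'M[CC]_m) : Prop :=
  forall g, g \in G -> forall X,
    U' g *m L X *m adj (U' g) = L (U g *m X *m adj (U g)).

(** Every [a] in [Sym_G(psi)] acts on [psi] by a phase [theta a].  Since [G]
    is abelian, the joint [theta]-eigenspace of [Sym_G(psi)] is [G]-stable,
    so it contains a common eigenvector of all of [G], whose eigenvalues form
    a character [chi] of [G] extending [theta].  Twisting [U] by [chi^*] does
    not change the conjugation action [X |-> U g X U g^dagger], so the
    identity channel is covariant in both directions and [Sym_G] is
    unchanged, while the twisted [U' a] now fixes [psi] for [a] in [Sym_G]. *)

From HB Require Import structures.
From mathcomp Require Import all_boot all_order all_algebra all_fingroup.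
From mathcomp Require Import Rstruct complex mxrepresentation.
From Stdlib Require Import Classical_Prop.
Set Implicit Arguments.
Unset Strict Implicit.
Unset Printing Implicit Defensive.

Import Order.TTheory GRing.Theory Num.Theory.
Local Open Scope ring_scope.

Lemma scalerIl (F : fieldType) (V : lmodType F) (v : V) :
  v != 0 -> injective ( *:%R^~ v : F -> V).
Proof.
move=> nz_v a b eq_ab; apply/eqP; rewrite -subr_eq0.
have : (a - b) *: v == 0 by rewrite scalerBl eq_ab subrr.
by rewrite scaler_eq0 (negbTE nz_v) orbF.
Qed.

Lemma trmx_eigenvector (R : comPzRingType) n (A : 'M[R]_n) (w : 'cV[R]_n) c :
  A *m w = c *: w <-> w^T *m A^T = c *: w^T.
Proof.
split=> [Aw | wA]; first by rewrite -trmx_mul Aw linearZ.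
by rewrite -[A]trmxK -[w]trmxK -trmx_mul wA linearZ.
Qed.

Section AbelianRepresentation.

Variables (gT : finGroupType) (G : {group gT}).
Hypothesis cGG : abelian G.

Lemma abelian_repr_comm (R : comUnitRingType) n (U : gT -> 'M[R]_n) :
  mx_repr G U -> {in G &, forall x y, U x *m U y = U y *m U x}.
Proof. by move=> rU x y Gx Gy; rewrite -!rU.2 // (centsP cGG). Qed.

Lemma trmx_repr (R : comUnitRingType) n (U : gT -> 'M[R]_n) :
  mx_repr G U -> mx_repr G (fun g => (U g)^T).
Proof.
move=> rU; split=> [|x y Gx Gy] /=; first by rewrite rU.1 trmx1.
by rewrite -trmx_mul abelian_repr_comm // rU.2.
Qed.

Variable F : closedFieldType.

(* Any simple submodule of [E] is a line, since [G] is abelian and [F] is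
   algebraically closed; its spanning vector is the eigenvector. *)
Lemma abelian_mxmodule_eigenvector n (rG : mx_representation F G n) m
    (E : 'M_(m, n)) :
  mxmodule rG E -> E != 0 ->
  exists v : 'rV_n, exists chi : gT -> F,
    [/\ v != 0, (v <= E)%MS & {in G, forall x, v *m rG x = chi x *: v}].
Proof.
move=> modE nzE; have /classicP simple_sub := mxsimple_exists modE nzE.
apply: NNPP => no_v; apply: simple_sub => -[V simV sVE]; apply: no_v.
have linV :=
  mxsimple_abelian_linear (@group_closure_closed_field F gT G) cGG simV.
have [modV _ _] := simV.
have [v [chi defV Gv]] := mxmodule_eigenvector modV linV.
exists v, chi; split=> //; last by rewrite -defV.
by rewrite -mxrank_eq0 -defV linV.
Qed.

Lemma abelian_common_eigenvector n (U : gT -> 'M[F]_n) (S : {set gT})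
    (theta : gT -> F) (w0 : 'cV[F]_n) :
  mx_repr G U -> S \subset G -> w0 != 0 ->
  {in S, forall a, U a *m w0 = theta a *: w0} ->
  exists w : 'cV[F]_n, exists chi : gT -> F,
    [/\ w != 0, {in G, forall g, U g *m w = chi g *: w}
      & {in S, forall a, U a *m w = theta a *: w}].
Proof.
move=> rU sSG nz_w0 Sw0; pose rT := MxRepresentation (trmx_repr rU).
pose E := (\bigcap_(a in S) eigenspace (U a)^T (theta a))%MS.
have E_eigen a : a \in S -> E *m (U a)^T = theta a *: E.
  by move=> Sa; apply/eigenspaceP; exact: bigcapmx_inf Sa (submx_refl _).
have w0E : (w0^T <= E)%MS.
  by apply/sub_bigcapmxP=> a Sa; apply/eigenspaceP/trmx_eigenvector/Sw0.
have modE : mxmodule rT E.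
  apply/mxmoduleP=> g Gg; apply/sub_bigcapmxP=> a Sa; apply/eigenspaceP => /=.
  have Ga := subsetP sSG a Sa.
  rewrite -mulmxA -!trmx_mul abelian_repr_comm // trmx_mul mulmxA.
  by rewrite (E_eigen a Sa) scalemxAl.
have nzE : E != 0.
  apply: contraNneq nz_w0 => E0; move: w0E; rewrite E0 submx0 => /eqP.
  by move/(congr1 trmx); rewrite trmxK trmx0 => ->.
have [v [chi [nz_v vE Gv]]] := abelian_mxmodule_eigenvector modE nzE.
exists v^T, chi; split.
- by apply: contraNneq nz_v => v0; rewrite -[v]trmxK v0 trmx0.
- by move=> g Gg; apply/trmx_eigenvector; rewrite trmxK; apply: Gv.
move=> a Sa; apply/trmx_eigenvector; rewrite trmxK; apply/eigenspaceP.
by apply: submx_trans vE _; apply: bigcapmx_inf Sa (submx_refl _).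
Qed.

End AbelianRepresentation.

Section EigenCharacter.

Variables (F : numClosedFieldType) (gT : finGroupType) (G : {group gT}).
Variables (n : nat) (U : gT -> 'M[F]_n) (w : 'cV[F]_n) (chi : gT -> F).
Hypotheses (rU : mx_repr G U) (nz_w : w != 0).
Hypothesis Uw : {in G, forall g, U g *m w = chi g *: w}.

Lemma eigen_charM : {in G &, {morph chi : x y / (x * y)%g >-> x * y}}.
Proof.
move=> x y Gx Gy; apply: (scalerIl nz_w).
by rewrite -Uw ?groupM // rU.2 // -mulmxA Uw // -scalemxAr Uw // scalerA mulrC.
Qed.

Lemma eigen_char1 : chi 1%g = 1.
Proof. by apply: (scalerIl nz_w); rewrite -Uw // rU.1 mul1mx scale1r. Qed.

Lemma eigen_charX g k : g \in G -> chi (g ^+ k)%g = chi g ^+ k.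
Proof.
move=> Gg; elim: k => [|k IHk]; first by rewrite expg0 eigen_char1 expr0.
by rewrite expgS eigen_charM ?groupX // IHk exprS.
Qed.

(* [chi g] is a root of unity, of order dividing #[g]. *)
Lemma eigen_char_unitary g : g \in G -> (chi g)^* * chi g = 1.
Proof.
move=> Gg; rewrite -normCKC.
have chi_g_order : `|chi g| ^+ #[g]%g == 1.
  by rewrite -normrX -eigen_charX // expg_order eigen_char1 normr1.
move: chi_g_order; rewrite pexpr_eq1 ?order_gt0 // => /eqP ->.
by rewrite expr1n.
Qed.

End EigenCharacter.

Lemma adjZ m n (c : CC) (A : 'M[CC]_(m, n)) : adj (c *: A) = c^* *: adj A.
Proof. by apply/matrixP=> i j; rewrite !mxE rmorphM. Qed.

Lemma pure_state_neq0 n (psi : 'cV[CC]_n) : pure_state psi -> psi != 0.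
Proof.
move=> pure_psi; apply/eqP => psi0; move: pure_psi.
rewrite /pure_state psi0 mulmx0 => /matrixP/(_ 0 0); rewrite !mxE /= => /eqP.
by rewrite eq_sym oner_eq0.
Qed.

Lemma proj_fixed_eigenvector n (V : 'M[CC]_n) (psi : 'cV[CC]_n) :
  unitary_mx V -> pure_state psi -> V *m proj psi *m adj V = proj psi ->
  V *m psi = (adj psi *m V *m psi) 0 0 *: psi.
Proof.
move=> [_ unitV] pure_psi fix_psi.
have <- : proj psi *m (V *m psi) = V *m psi.
  rewrite -fix_psi /proj !mulmxA -(mulmxA _ (adj V)) unitV mulmx1.
  by rewrite -(mulmxA _ (adj psi)) pure_psi mulmx1.
by rewrite /proj -mulmxA (mx11_scalar (adj psi *m _)) mul_mx_scalar mulmxA.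
Qed.

Lemma CPTP_id n : CPTP (fun X : 'M[CC]_n => X).
Proof.
split=> //; split=> // k X psdX x.
rewrite (eq_bigr (fun i => \sum_j (x i)^* * X i j * x j)) ?psdX //.
move=> -[i1 i2] _.
by apply: eq_bigr => -[j1 j2] _; rewrite /ampl /= mxE.
Qed.

Section Twist.

Variables (gT : finGroupType) (G : {group gT}) (n : nat).
Variables (U : gT -> 'M[CC]_n) (chi : gT -> CC).
Hypothesis chiM : {in G &, {morph chi : x y / (x * y)%g >-> x * y}}.
Hypothesis chi1 : chi 1%g = 1.
Hypothesis chi_unitary : {in G, forall g, (chi g)^* * chi g = 1}.

Definition twist_rep g := (chi g)^* *: U g.

Lemma twist_rep_conj g X : g \in G ->
  twist_rep g *m X *m adj (twist_rep g) = U g *m X *m adj (U g).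
Proof.
move=> Gg; rewrite /twist_rep adjZ -!scalemxAl -scalemxAr scalerA conjCK.
by rewrite chi_unitary // scale1r.
Qed.

Lemma twist_unitary_rep : unitary_rep G U -> unitary_rep G twist_rep.
Proof.
move=> [rU unitU]; split; first split.
- by rewrite /twist_rep chi1 rmorph1 scale1r rU.1.
- move=> x y Gx Gy; rewrite /twist_rep chiM // rmorphM rU.2 //.
  by rewrite -scalemxAl -scalemxAr scalerA mulrC.
move=> g Gg; have [U_adjU adjU_U] := unitU g Gg; split.
  by have := twist_rep_conj 1%:M Gg; rewrite !mulmx1 => ->.
rewrite /twist_rep adjZ -scalemxAl -scalemxAr scalerA conjCK mulrC.
by rewrite chi_unitary // scale1r.
Qed.

Lemma SymG_twist_rep psi : SymG G twist_rep psi = SymG G U psi.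
Proof.
by apply/setP=> g; rewrite !inE; case Gg: (g \in G); rewrite //= twist_rep_conj.
Qed.

Lemma twist_rep_covariant_id : covariant G U twist_rep (fun X => X).
Proof. by move=> g Gg X; rewrite twist_rep_conj. Qed.

Lemma twist_rep_covariant_id_rev : covariant G twist_rep U (fun X => X).
Proof. by move=> g Gg X; rewrite twist_rep_conj. Qed.

End Twist.

Theorem mainTheorem6 (gT : finGroupType) (G : {group gT}) (n : nat)
  (U : gT -> 'M[CC]_n) (psi : 'cV[CC]_n) :
  abelian G -> unitary_rep G U -> pure_state psi ->
  exists (m : nat) (U' : gT -> 'M[CC]_m) (psi' : 'cV[CC]_m)
         (L1 : 'M[CC]_n -> 'M[CC]_m) (L2 : 'M[CC]_m -> 'M[CC]_n),
    [/\ unitary_rep G U', pure_state psi',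
        CPTP L1 /\ covariant G U U' L1 /\ L1 (proj psi) = proj psi',
        CPTP L2 /\ covariant G U' U L2 /\ L2 (proj psi') = proj psi &
        forall a, a \in SymG G U' psi' -> U' a *m psi' = psi'].
Proof.
move=> cGG [rU unitU] pure_psi.
pose theta a := (adj psi *m U a *m psi) 0 0.
have Sym_eigen : {in SymG G U psi, forall a, U a *m psi = theta a *: psi}.
  move=> a; rewrite inE => /andP[Ga /eqP].
  exact: proj_fixed_eigenvector (unitU a Ga) pure_psi.
have sSG : SymG G U psi \subset G by apply/subsetP=> a; rewrite inE => /andP[].
have [w [chi [nz_w Gw Sw]]] :=
  abelian_common_eigenvector cGG rU sSG (pure_state_neq0 pure_psi) Sym_eigen.
have chi_theta a : a \in SymG G U psi -> chi a = theta a.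
  by move=> Sa; apply: (scalerIl nz_w); rewrite -Sw // Gw // (subsetP sSG).
have chiM := eigen_charM rU nz_w Gw; have chi1 := eigen_char1 rU nz_w Gw.
have chi_unitary := eigen_char_unitary rU nz_w Gw.
exists n, (twist_rep U chi), psi, id, id; split=> //.
- exact: twist_unitary_rep chiM chi1 chi_unitary (conj rU unitU).
- by split; [exact: CPTP_id | split; first exact: twist_rep_covariant_id].
- by split; [exact: CPTP_id | split; first exact: twist_rep_covariant_id_rev].
move=> a; rewrite (SymG_twist_rep _ chi_unitary) => Sa.
rewrite /twist_rep -scalemxAl Sym_eigen // -chi_theta // scalerA.
by rewrite chi_unitary ?scale1r // (subsetP sSG).
Qed.
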